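(* Consider the implicit scheme and the semi-implicit scheme of the ISPH method described in the context. Suppose that, for every $k=0,1,\dots,K-1$, the particle distribution $X^k=\{x^k_1,\dots,x^k_N\}$ (with its partition $\{1,\dots,N\}=\Lambda_F^k\cup\Lambda_S^k\cup\Lambda_W^k$) satisfies the $h$-connectivity condition. Then both the implicit scheme and the semi-implicit scheme have a unique solution, i.e. at every step $k=0,\dots,K-1$ the equations of the step uniquely determine $\tilde u^{k+1}$, $p^{k+1}$ and $u^{k+1}$.
   Context: Let $d\in\{2,3\}$, $\Omega\subset\mathbb{R}^d$ a bounded domain with smooth boundary, $|\Omega|$ its volume. Fix $\rho>0$ (density), $\nu>0$ (viscosity), $T>0$, a body force $f:\overline\Omega\times[0,T]\to\mathbb{R}^d$ and an initial velocity $u_0:\overline\Omega\to\mathbb{R}^d$. Let $\Delta t>0$, $K=\lfloor T/\Delta t\rfloor$, $t^k=k\Delta t$. Reference weight function: $w\in C^2([0,\infty))$ such that for some $r_0>0$: $w(r)>0$ for $0<r<r_0$, $w(r)=0$ for $r\ge r_0$; $\dot w(r)<0$ for $0<r<r_0$, $\dot w(r)=0$ for $r=0$ or $r\ge r_0$; and $\int_{\mathbb{R}^d}w(|x|)\,dx=1$. For a smoothing length $h>0$ put $w_h(r)=h^{-d}w(r/h)$ with derivative $\dot w_h$, and for $x\neq y$ write $\nabla w_h(|x-y|)=\dot w_h(|x-y|)\frac{x-y}{|x-y|}$ (gradient in $x$), with $\nabla w_h(0):=0$. Particles: $N\in\mathbb{N}$, particle volumes $V_1,\dots,V_N>0$ with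 $\sum_i V_i=|\Omega|$. At each time level $k$ there are pairwise distinct positions $x^k_1,\dots,x^k_N\in\overline\Omega$ with $r_0h>\min_{i\ne j}|x^k_i-x^k_j|$, and a partition of $I_N=\{1,\dots,N\}$ into disjoint sets $\Lambda^k_F$ (inner fluid particles), $\Lambda^k_S$ (free-surface particles), $\Lambda^k_W$ (wall particles). Set $f^k_i=f(x^k_i,t^k)$ for $i\in\Lambda_F^k\cup\Lambda_S^k$ and $f^k_i=0$ for $i\in\Lambda_W^k$. Positions are updated by $x^{k+1}_i=x^k_i+\Delta t\,u^{k+1}_i$. Discrete operators at level $k$ (all distances $|x^k_i-x^k_j|$, gradients $\nabla w_h(|x^k_i-x^k_j|)$): for vector data $v$, $(\Delta_h v)_i=2\sum_{j\ne i,\,j\in I_N}V_j\frac{v_i-v_j}{|x^k_i-x^k_j|}\frac{x^k_i-x^k_j}{|x^k_i-x^k_j|}\cdot\nabla w_h(|x^k_i-x^k_j|)$; $(\nabla_h\cdot v)_i=\sum_{j=1}^N V_j(v_j+v_i)\cdot\nabla w_h(|x^k_i-x^k_j|)$; for scalar $p$ defined on $\Lambda_F^k\cup\Lambda_S^k$, $(\nabla_h p)_i=\sum_{j\in\Lambda_F^k\cup\Lambda_S^k}V_j(p_j-p_i)\nabla w_h(|x^k_i-x^k_j|)$ and $(\Delta_h p)_i=2\sum_{j\in\Lambda_F^k\cup\Lambda_S^k\setminus\{i\}}V_j\frac{p_i-p_j}{|x^k_i-x^k_j|}\frac{x^k_i-x^k_j}{|x^k_i-x^k_j|}\cdot\nabla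 w_h(|x^k_i-x^k_j|)$. Implicit scheme: $u^0_i=u_0(x^0_i)$ ($i=1..N$), and for $k=0,\dots,K-1$ find $\tilde u^{k+1}\in(\mathbb{R}^d)^N$, $p^{k+1}\in\mathbb{R}^{\Lambda_F^k\cup\Lambda_S^k}$, $u^{k+1}\in(\mathbb{R}^d)^N$ with: (b) $\frac{\tilde u^{k+1}_i-u^k_i}{\Delta t}=\nu(\Delta_h\tilde u^{k+1})_i+f^k_i$ for $i\in\Lambda_F^k\cup\Lambda_S^k$, $\tilde u^{k+1}_i=0$ for $i\in\Lambda_W^k$; (c) $(\Delta_h p^{k+1})_i=\frac{\rho}{\Delta t}(\nabla_h\cdot\tilde u^{k+1})_i$ for $i\in\Lambda_F^k$, $p^{k+1}_i=0$ for $i\in\Lambda_S^k$; (d) $\frac{u^{k+1}_i-\tilde u^{k+1}_i}{\Delta t}=-\frac1\rho(\nabla_h p^{k+1})_i$ for $i\in\Lambda_F^k\cup\Lambda_S^k$, $u^{k+1}_i=0$ for $i\in\Lambda_W^k$. The semi-implicit scheme is identical except that (b) is replaced by $\frac{\tilde u^{k+1}_i-u^k_i}{\Delta t}=\nu(\Delta_h u^k)_i+f^k_i$ for $i\in\Lambda_F^k\cup\Lambda_S^k$, $\tilde u^{k+1}_i=0$ for $i\in\Lambda_W^k$. $h$-connectivity condition for $X^k$: for every $i\in\Lambda_F^k$ there exist finite sequences $i=i_1,i_2,\dots,i_\zeta$ and $i=i^*_1,\dots,i^*_{\zeta^*}$ in $I_N$ with $0<|x^k_{i_l}-x^k_{i_{l+1}}|<r_0h$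 and $i_l\in\Lambda_F^k$ for $1\le l<\zeta$, $i_\zeta\in\Lambda_S^k$; and $0<|x^k_{i^*_l}-x^k_{i^*_{l+1}}|<r_0h$ and $i^*_l\in\Lambda_F^k$ for $1\le l<\zeta^*$, $i^*_{\zeta^*}\in\Lambda_W^k$. *)

From HB Require Import structures.
From mathcomp Require Import all_boot all_order all_algebra.
From mathcomp Require Import all_classical all_reals all_analysis.
Set Implicit Arguments. Unset Strict Implicit. Unset Printing Implicit Defensive.
Import Order.TTheory GRing.Theory Num.Theory.
Import numFieldNormedType.Exports.
Local Open Scope classical_set_scope.
Local Open Scope ring_scope.

Section ISPH.
Variables (R : realType) (d : nat).

Definition dotv (a b : 'rV[R]_d) : R := \sum_(l < d) a 0 l * b 0 l.
Definition enorm (a : 'rV[R]_d) : R := Num.sqrt (dotv a a).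

Definition C2_nonneg (w dw d2w : R -> R) : Prop :=
  (forall r : R, 0 < r -> is_derive r (1 : R) w (dw r)) /\
  (forall r : R, 0 < r -> is_derive r (1 : R) dw (d2w r)) /\
  ((fun t : R => t^-1 * (w t - w 0)) @ 0^'+ --> dw 0) /\
  ((fun t : R => t^-1 * (dw t - dw 0)) @ 0^'+ --> d2w 0) /\
  {within `[0, +oo[, continuous d2w}.

Definition radial_normalized (w : R -> R) : Prop :=
  if d == 2%N then
    (\int[(@lebesgue_measure R) \x (@lebesgue_measure R)]_(z in setT)
        (w (Num.sqrt (z.1 ^+ 2 + z.2 ^+ 2)))%:E = 1)%E
  else
    (\int[((@lebesgue_measure R) \x (@lebesgue_measure R)) \x (@lebesgue_measure R)]_(z in setT)
        (w (Num.sqrt (z.1.1 ^+ 2 + z.1.2 ^+ 2 + z.2 ^+ 2)))%:E = 1)%E.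

Definition weight_fun (w dw : R -> R) (r0 : R) : Prop :=
  0 < r0 /\ (exists d2w, C2_nonneg w dw d2w) /\
  (forall r, 0 < r < r0 -> 0 < w r) /\ (forall r, r0 <= r -> w r = 0) /\
  (forall r, 0 < r < r0 -> dw r < 0) /\ dw 0 = 0 /\ (forall r, r0 <= r -> dw r = 0) /\
  radial_normalized w.

(* derivative of w_h(r) = h^-d w(r/h) *)
Definition dwh (dw : R -> R) (h r : R) : R := h ^- d.+1 * dw (r / h).

(* grad w_h(|a - b|), with grad w_h(0) := 0 *)
Definition gradw (dw : R -> R) (h : R) (a b : 'rV[R]_d) : 'rV[R]_d :=
  if a == b then 0 else (dwh dw h (enorm (a - b)) / enorm (a - b)) *: (a - b).

Variables (N : nat) (dw : R -> R) (h : R) (V : 'I_N -> R) (x : 'I_N -> 'rV[R]_d).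

Local Notation gw i j := (gradw dw h (x i) (x j)).
Local Notation dist i j := (enorm (x i - x j)).

Definition lap_v (v : 'I_N -> 'rV[R]_d) (i : 'I_N) : 'rV[R]_d :=
  2 *: \sum_(j < N | j != i)
     ((V j / dist i j) * dotv ((dist i j)^-1 *: (x i - x j)) (gw i j)) *: (v i - v j).

Definition div_v (v : 'I_N -> 'rV[R]_d) (i : 'I_N) : R :=
  \sum_(j < N) V j * dotv (v j + v i) (gw i j).

Definition grad_p (FS : {set 'I_N}) (p : 'I_N -> R) (i : 'I_N) : 'rV[R]_d :=
  \sum_(j in FS) (V j * (p j - p i)) *: gw i j.

Definition lap_p (FS : {set 'I_N}) (p : 'I_N -> R) (i : 'I_N) : R :=
  2 * \sum_(j in FS | j != i)
     V j * (p i - p j) / dist i j * dotv ((dist i j)^-1 *: (x i - x j)) (gw i j).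

Definition step_eqs (implicit : bool) (LF LS LW : {set 'I_N})
    (rho nu dt : R) (fk : 'I_N -> 'rV[R]_d) (uk ut : 'I_N -> 'rV[R]_d)
    (p : 'I_N -> R) (un : 'I_N -> 'rV[R]_d) : Prop :=
  (forall i, i \in LF :|: LS ->
     dt^-1 *: (ut i - uk i) = nu *: lap_v (if implicit then ut else uk) i + fk i) /\
  (forall i, i \in LW -> ut i = 0) /\
  (forall i, i \in LF -> lap_p (LF :|: LS) p i = rho / dt * div_v ut i) /\
  (forall i, i \in LS -> p i = 0) /\
  (forall i, i \in LF :|: LS ->
     dt^-1 *: (un i - ut i) = - (rho^-1 *: grad_p (LF :|: LS) p i)) /\
  (forall i, i \in LW -> un i = 0).

(* unique solvability of a step: existence, and uniqueness of ut, u and of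
   p on LF ∪ LS (the set on which p is defined) *)
Definition uniquely_solvable implicit LF LS LW rho nu dt fk uk : Prop :=
  (exists ut p un, step_eqs implicit LF LS LW rho nu dt fk uk ut p un) /\
  (forall ut1 p1 un1 ut2 p2 un2,
     step_eqs implicit LF LS LW rho nu dt fk uk ut1 p1 un1 ->
     step_eqs implicit LF LS LW rho nu dt fk uk ut2 p2 un2 ->
     ut1 = ut2 /\ un1 = un2 /\ (forall i, i \in LF :|: LS -> p1 i = p2 i)).

Definition near_rel (r0 : R) : rel 'I_N :=
  fun a b => (0 < dist a b) && (dist a b < r0 * h).

Definition h_connected (r0 : R) (LF LS LW : {set 'I_N}) : Prop :=
  forall i, i \in LF ->
    (exists s : seq 'I_N, [&& path (near_rel r0) i s,
        all (fun j => j \in LF) (belast i s) & last i s \in LS]) /\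
    (exists s : seq 'I_N, [&& path (near_rel r0) i s,
        all (fun j => j \in LF) (belast i s) & last i s \in LW]).

End ISPH.

From HB Require Import structures.
From mathcomp Require Import all_boot all_order all_algebra.
From mathcomp Require Import all_classical all_reals all_analysis.
From mathcomp Require Import ring.
Import Order.TTheory GRing.Theory Num.Theory.
Import numFieldNormedType.Exports.
Local Open Scope classical_set_scope.
Local Open Scope ring_scope.
Set Implicit Arguments. Unset Strict Implicit. Unset Printing Implicit Defensive.

(* Each time step splits into the predictor (b), the pressure Poisson equation (c)
   and the correction (d).  The correction and the semi-implicit predictor are
   explicit updates.  The implicit predictor (componentwise) and the pressure
   equation are Dirichlet problems for operators
     (L v)_i = c_i v_i + sum_j g_ij (v_i - v_j),   c, g >= 0:
   since w is decreasing, the SPH Laplacian coefficients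
   kappa_ij = V_j w_h'(|x_i - x_j|) / |x_i - x_j| are <= 0, and < 0 between
   h-neighbours.  Such an L satisfies a discrete maximum principle as soon as every
   interior node is joined by a path of positive weights to the boundary or to a
   node where c > 0, because a positive maximum spreads along that path.  For the
   predictor c = 1/dt > 0; for the pressure c = 0, and the free-surface half of
   h-connectivity provides the path to a particle where p = 0.  So the homogeneous problems have only the trivial solution and the
   square linear systems are invertible. *)

Section GraphLaplacian.
Variables (R : realFieldType) (N : nat) (c : 'I_N -> R) (g : 'I_N -> 'I_N -> R).

Definition glap (v : 'I_N -> R) (i : 'I_N) : R :=
  c i * v i + \sum_j g i j * (v i - v j).

Lemma glap_linear a u v i :
  glap (fun j => a * u j + v j) i = a * glap u i + glap v i.
Proof.
rewrite /glap [in RHS]mulrDr mulr_sumr addrACA -big_split /=.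
by congr (_ + _); [ring | apply: eq_bigr => j _; ring].
Qed.

Lemma glapB u v i : glap (u \- v) i = glap u i - glap v i.
Proof.
rewrite addrC -mulN1r -glap_linear; congr glap.
by apply/funext => j /=; rewrite mulN1r addrC.
Qed.

Lemma glap0 i : glap (fun=> 0) i = 0.
Proof. by rewrite /glap mulr0 add0r big1 // => j _; rewrite subr0 mulr0. Qed.

Variable U : {set 'I_N}.

Definition dirichlet_map (v : 'rV[R]_N) : 'rV[R]_N :=
  \row_j (if j \in U then glap (v 0) j else v 0 j).

Fact dirichlet_map_is_linear : linear dirichlet_map.
Proof.
move=> a u v; apply/rowP => j; rewrite !mxE; case: ifP => _ //.
rewrite -glap_linear; congr glap; apply/funext => k; by rewrite !mxE.
Qed.

HB.instance Definition _ := GRing.isLinear.Build R 'rV[R]_N 'rV[R]_N *:%R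
  dirichlet_map dirichlet_map_is_linear.

Hypothesis c_ge0 : forall i, 0 <= c i.
Hypothesis g_ge0 : forall i j, 0 <= g i j.
Hypothesis U_reach : forall i, i \in U ->
  exists2 s, path (fun a b => 0 < g a b) i s & (last i s \notin U) || (0 < c (last i s)).

Lemma glap_max_principle v :
  (forall i, i \in U -> glap v i <= 0) -> (forall i, i \notin U -> v i <= 0) ->
  forall i, v i <= 0.
Proof.
move=> glap_le0 out_le0 i0; rewrite leNgt; apply/negP => vi0_gt0.
have [m _ vm_max] := @arg_maxP _ _ _ i0 xpredT v isT.
set M := v m in vm_max.
have M_gt0 : 0 < M := lt_le_trans vi0_gt0 (vm_max i0 isT).
have inU a : v a = M -> a \in U.
  by move=> va; apply: contraT => /out_le0; rewrite va leNgt M_gt0.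
have spread a : v a = M -> c a = 0 /\ forall b, 0 < g a b -> v b = M.
  move=> va; have sum_le0 := glap_le0 a (inU a va); rewrite /glap va in sum_le0.
  have term_ge0 j : 0 <= g a j * (M - v j).
    by rewrite mulr_ge0 // subr_ge0; apply: vm_max.
  have cM_ge0 : 0 <= c a * M by rewrite mulr_ge0 // ltW.
  have /eqP : c a * M + \sum_j g a j * (M - v j) = 0.
    by apply/le_anti; rewrite sum_le0 addr_ge0 // sumr_ge0.
  rewrite paddr_eq0 ?sumr_ge0 // => /andP[caM /eqP sum0]; split.
    by move: caM; rewrite mulf_eq0 (gt_eqF M_gt0) orbF => /eqP.
  move=> b gab; have /eqP := @psumr_eq0P _ _ xpredT _ (fun j _ => term_ge0 j) sum0 b isT.
  by rewrite mulf_eq0 (gt_eqF gab) subr_eq0 => /eqP <-.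
have last_max a s : v a = M -> path (fun a b => 0 < g a b) a s -> v (last a s) = M.
  elim: s a => [|b s IH] a //= va /andP[gab ps].
  exact: IH ((spread a va).2 b gab) ps.
have [s ps] := U_reach (inU m erefl).
have vl := last_max m s erefl ps.
by rewrite inU // (spread _ vl).1 ltxx.
Qed.

Lemma glap_inj u v :
  (forall i, i \in U -> glap u i = glap v i) -> (forall i, i \notin U -> u i = v i) ->
  u =1 v.
Proof.
have le (a b : 'I_N -> R) :
    (forall i, i \in U -> glap a i = glap b i) -> (forall i, i \notin U -> a i = b i) ->
    forall i, a i <= b i.
  move=> Eg Eo i; rewrite -subr_le0; apply: (glap_max_principle (v := a \- b)) => j jU.
    by rewrite glapB Eg // subrr.
  by rewrite /= Eo // subrr.
by move=> Eg Eo i; apply/le_anti; rewrite !le // => j jU; rewrite (Eg, Eo).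
Qed.

Lemma glap_dirichlet_solvable b : exists v,
  (forall i, i \in U -> glap v i = b i) /\ (forall i, i \notin U -> v i = b i).
Proof.
pose A := lin1_mx dirichlet_map.
have A_unit : A \in unitmx.
  rewrite -row_free_unit; apply: inj_row_free => v; rewrite mul_rV_lin1 => /rowP v0.
  apply/rowP => j; rewrite mxE; apply: (glap_inj (v := fun=> 0)) => i iU;
    by have := v0 i; rewrite !mxE ?iU ?(negbTE iU) ?glap0.
pose v := \row_j b j *m invmx A.
have /rowP Ev : dirichlet_map v = \row_j b j by rewrite -mul_rV_lin1 mulmxKV.
by exists (v 0); split => i iU; have := Ev i; rewrite !mxE ?iU ?(negbTE iU).
Qed.

Variable d : nat.

Definition glapv (v : 'I_N -> 'rV[R]_d) (i : 'I_N) : 'rV[R]_d :=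
  c i *: v i + \sum_j g i j *: (v i - v j).

Lemma glapvE v i l : glapv v i 0 l = glap (fun j => v j 0 l) i.
Proof.
rewrite !mxE summxE; congr (_ + _); apply: eq_bigr => j _; by rewrite !mxE.
Qed.

Lemma glapv_dirichlet_unique b : exists! v : 'I_N -> 'rV[R]_d,
  (forall i, i \in U -> glapv v i = b i) /\ (forall i, i \notin U -> v i = b i).
Proof.
have /fin_all_exists[sol solP] l := glap_dirichlet_solvable (fun i => b i 0 l).
have solE l : (fun j => (\row_l' sol l' j) 0 l) = sol l.
  by apply/funext => j; rewrite mxE.
exists (fun i => \row_l sol l i); split.
  split=> i iU; apply/rowP => l; rewrite ?glapvE ?solE ?mxE;
    by [apply: (solP l).1 | apply: (solP l).2].
move=> v [Ev Eo]; apply/funext => i; apply/rowP => l; rewrite mxE.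
apply: (glap_inj (u := sol l) (v := fun j => v j 0 l)) => j jU.
  by rewrite -glapvE Ev // (solP l).1.
by rewrite Eo // (solP l).2.
Qed.

End GraphLaplacian.

Lemma explicit_update (R : fieldType) (V : lmodType R) (N : nat) (a : R)
    (S : {set 'I_N}) (u0 F : 'I_N -> V) : a != 0 ->
  exists! u : 'I_N -> V,
    (forall i, i \in S -> a^-1 *: (u i - u0 i) = F i) /\ (forall i, i \in ~: S -> u i = 0).
Proof.
move=> a0; exists (fun i => if i \in S then u0 i + a *: F i else 0); split.
  split=> i; rewrite ?inE => iS; rewrite ?iS ?(negbTE iS) //.
  by rewrite addrC addKr scalerA mulVf // scale1r.
move=> u [Eu Wu]; apply/funext => i; case: ifP => iS; last by rewrite Wu // inE iS.
by rewrite -(Eu i iS) scalerA mulfV // scale1r addrC subrK.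
Qed.

Lemma subr_eq_swap (V : zmodType) (a b c e : V) : (a - b = c + e) <-> (a - c = b + e).
Proof.
suff imp (b' c' : V) : a - b' = c' + e -> a - c' = b' + e by split; apply: imp.
by move=> E; rewrite -[a](subrK b') E addrAC [c' + e]addrC addrK addrC.
Qed.

Lemma partition_compl (T : finType) (A B C : {set T}) :
  (forall i, i \in A :|: B :|: C) -> (forall i, i \in A -> i \notin C) ->
  (forall i, i \in B -> i \notin C) -> C = ~: (A :|: B).
Proof.
move=> cover A_C B_C; apply/setP => i; rewrite !inE; apply/idP/idP => [iC|].
  by rewrite negb_or; apply/andP; split; apply: contraL iC; [exact: A_C | exact: B_C].
by move: (cover i); rewrite !inE => /orP[-> | ->].
Qed.

Section ISPHStep.
Variables (R : realType) (d N : nat) (dw : R -> R) (h r0 : R) (V : 'I_N -> R)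
  (x : 'I_N -> 'rV[R]_d).

Lemma dotvZ (s t : R) (a b : 'rV[R]_d) : dotv (s *: a) (t *: b) = s * t * dotv a b.
Proof. by rewrite /dotv mulr_sumr; apply: eq_bigr => l _; rewrite !mxE; ring. Qed.

Lemma dotv0 (a : 'rV[R]_d) : dotv a 0 = 0.
Proof. by rewrite /dotv big1 // => l _; rewrite mxE mulr0. Qed.

Lemma enorm_ge0 (a : 'rV[R]_d) : 0 <= enorm a.
Proof. exact: sqrtr_ge0. Qed.

Lemma enorm_sqr (a : 'rV[R]_d) : enorm a ^+ 2 = dotv a a.
Proof. by rewrite sqr_sqrtr // sumr_ge0 // => l _; rewrite -expr2 sqr_ge0. Qed.

Definition kappa (i j : 'I_N) : R :=
  V j / enorm (x i - x j) *
  dotv ((enorm (x i - x j))^-1 *: (x i - x j)) (gradw dw h (x i) (x j)).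

(* Also when x i = x j, where gradw vanishes and 0^-1 = 0. *)
Lemma kappaE i j :
  kappa i j = V j * dwh d dw h (enorm (x i - x j)) / enorm (x i - x j).
Proof.
rewrite /kappa /gradw; case: eqP => [->|_].
  by rewrite subrr /enorm !dotv0 sqrtr0 invr0 !mulr0.
rewrite dotvZ -enorm_sqr; set D := enorm _.
have [->|D_neq0] := eqVneq D 0; first by rewrite invr0 !(mulr0, mul0r).
by field.
Qed.

Lemma lap_vE v i : lap_v dw h V x v i = \sum_j (2 * kappa i j) *: (v i - v j).
Proof.
rewrite [RHS](bigD1 i) //= subrr scaler0 add0r /lap_v scaler_sumr.
by apply: eq_bigr => j _; rewrite scalerA.
Qed.

Lemma lap_pE FS p i :
  lap_p dw h V x FS p i = \sum_(j in FS) 2 * kappa i j * (p i - p j).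
Proof.
rewrite [RHS](bigID (pred1 i)) /= big1 => [|j /andP[_ /eqP ->]]; last first.
  by rewrite subrr mulr0.
by rewrite add0r /lap_p mulr_sumr; apply: eq_bigr => j _; rewrite /kappa; ring.
Qed.

Lemma grad_p_eq (FS : {set 'I_N}) (p1 p2 : 'I_N -> R) i :
  (forall j, j \in FS -> p1 j = p2 j) -> i \in FS ->
  grad_p dw h V x FS p1 i = grad_p dw h V x FS p2 i.
Proof. by move=> E iFS; apply: eq_bigr => j jFS; rewrite !E. Qed.

Hypothesis h_gt0 : 0 < h.
Hypothesis V_gt0 : forall i, 0 < V i.
Hypothesis dw_le0 : forall r, 0 <= r -> dw r <= 0.
Hypothesis dw_lt0 : forall r, 0 < r < r0 -> dw r < 0.

Lemma dwh_le0 r : 0 <= r -> dwh d dw h r <= 0.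
Proof.
move=> r_ge0; apply: mulr_ge0_le0; first by rewrite invr_ge0 exprn_ge0 // ltW.
by apply: dw_le0; rewrite divr_ge0 // ltW.
Qed.

Lemma dwh_lt0 r : 0 < r < r0 * h -> dwh d dw h r < 0.
Proof.
move=> /andP[r_gt0 r_lt]; rewrite /dwh pmulr_rlt0 ?invr_gt0 ?exprn_gt0 //.
by apply: dw_lt0; rewrite divr_gt0 //= ltr_pdivrMr.
Qed.

Lemma kappa_le0 i j : kappa i j <= 0.
Proof.
rewrite kappaE; apply: mulr_le0_ge0; last by rewrite invr_ge0 enorm_ge0.
by apply: mulr_ge0_le0; [exact: ltW | exact/dwh_le0/enorm_ge0].
Qed.

Lemma kappa_lt0 i j : near_rel h x r0 i j -> kappa i j < 0.
Proof.
move=> near; have /andP[D_gt0 _] := near.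
by rewrite kappaE pmulr_llt0 ?invr_gt0 // pmulr_rlt0 // dwh_lt0.
Qed.

Variables (LF LS : {set 'I_N}) (nu dt : R).
Hypothesis nu_ge0 : 0 <= nu.
Hypothesis dt_gt0 : 0 < dt.
Hypothesis LF_LS_disjoint : forall i, i \in LF -> i \notin LS.
Hypothesis LS_reachable : forall i, i \in LF ->
  exists s, [&& path (near_rel h x r0) i s, all (fun j => j \in LF) (belast i s)
              & last i s \in LS].

Local Notation FS := (LF :|: LS).

Lemma LS_notin_LF i : i \in LS -> i \notin LF.
Proof. by apply: contraL; apply: LF_LS_disjoint. Qed.

Lemma glapv_viscous (v : 'I_N -> 'rV[R]_d) i :
  glapv (fun=> dt^-1) (fun i j => - (2 * nu * kappa i j)) v i =
  dt^-1 *: v i - nu *: lap_v dw h V x v i.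
Proof.
rewrite /glapv lap_vE scaler_sumr -sumrN; congr (_ + _); apply: eq_bigr => j _.
by rewrite scalerA -[RHS]scaleNr; congr (_ *: _); ring.
Qed.

Lemma implicit_velocity_unique (uk fk : 'I_N -> 'rV[R]_d) :
  exists! ut : 'I_N -> 'rV[R]_d,
  (forall i, i \in FS -> dt^-1 *: (ut i - uk i) = nu *: lap_v dw h V x ut i + fk i) /\
  (forall i, i \in ~: FS -> ut i = 0).
Proof.
have stepE u i : dt^-1 *: (u i - uk i) = nu *: lap_v dw h V x u i + fk i <->
    glapv (fun=> dt^-1) (fun i j => - (2 * nu * kappa i j)) u i = dt^-1 *: uk i + fk i.
  by rewrite glapv_viscous scalerBr; apply: subr_eq_swap.
have c_ge0 (i : 'I_N) : 0 <= dt^-1 by rewrite invr_ge0 ltW.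
have g_ge0 i j : 0 <= - (2 * nu * kappa i j).
  by rewrite oppr_ge0 mulr_ge0_le0 ?mulr_ge0 ?kappa_le0.
have reach i : i \in FS -> exists2 s, path (fun a b => 0 < - (2 * nu * kappa a b)) i s
    & (last i s \notin FS) || (0 < dt^-1) by exists [::]; rewrite ?invr_gt0 ?dt_gt0 ?orbT.
have [ut [[Eu Wu] ut_uniq]] := glapv_dirichlet_unique c_ge0 g_ge0 reach
  (fun i => if i \in FS then dt^-1 *: uk i + fk i else 0).
exists ut; split.
  split=> i iFS; first by apply/stepE; rewrite Eu // iFS.
  by move: iFS; rewrite inE => iFS; rewrite Wu // (negbTE iFS).
move=> u [Eb Wb]; apply: ut_uniq; split=> i iFS; first by rewrite iFS; apply/stepE/Eb.
by rewrite (negbTE iFS) Wb // inE.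
Qed.

Definition poisson_coef (i j : 'I_N) : R := if j \in FS then - (2 * kappa i j) else 0.

Lemma poisson_coef_ge0 i j : 0 <= poisson_coef i j.
Proof.
by rewrite /poisson_coef; case: ifP => // _; rewrite oppr_ge0 pmulr_rle0 ?kappa_le0.
Qed.

Lemma lap_p_glap p i : lap_p dw h V x FS p i = - glap (fun=> 0) poisson_coef p i.
Proof.
rewrite lap_pE /glap mul0r add0r -sumrN big_mkcond; apply: eq_bigr => j _.
by rewrite /poisson_coef; case: ifP => _; rewrite ?mulNr ?opprK ?mul0r ?oppr0.
Qed.

Lemma poisson_reach i : i \in LF -> exists2 s,
  path (fun a b => 0 < poisson_coef a b) i s & (last i s \notin LF) || (0 < 0 :> R).
Proof.
move=> iF; have [s /and3P[near_s belast_F last_S]] := LS_reachable iF.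
exists s; last by rewrite LS_notin_LF.
apply: (sub_in_path (P := fun j => j \in FS)) near_s => [a b _ bFS near_ab|].
  by rewrite /poisson_coef bFS oppr_gt0 pmulr_rlt0 // (kappa_lt0 near_ab).
rewrite lastI all_rcons inE last_S orbT /=.
by apply: sub_all belast_F => j jF; rewrite inE jF.
Qed.

Lemma pressure_solvable (b : 'I_N -> R) : exists p : 'I_N -> R,
  (forall i, i \in LF -> lap_p dw h V x FS p i = b i) /\ (forall i, i \in LS -> p i = 0).
Proof.
have [p [Ep Eo]] := glap_dirichlet_solvable (fun=> lexx 0) poisson_coef_ge0 poisson_reach
  (fun i => if i \in LF then - b i else 0).
exists p; split=> i iF; first by rewrite lap_p_glap Ep // iF opprK.
by rewrite Eo ?LS_notin_LF // (negbTE (LS_notin_LF iF)).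
Qed.

Lemma pressure_unique (b p1 p2 : 'I_N -> R) :
  (forall i, i \in LF -> lap_p dw h V x FS p1 i = b i) -> (forall i, i \in LS -> p1 i = 0) ->
  (forall i, i \in LF -> lap_p dw h V x FS p2 i = b i) -> (forall i, i \in LS -> p2 i = 0) ->
  forall i, i \in FS -> p1 i = p2 i.
Proof.
move=> E1 S1 E2 S2.
pose restr (p : 'I_N -> R) j := if j \in FS then p j else 0.
have restrE p i : i \in FS -> lap_p dw h V x FS (restr p) i = lap_p dw h V x FS p i.
  by move=> iFS; rewrite !lap_pE; apply: eq_bigr => j jFS; rewrite /restr iFS jFS.
have restr_eq : restr p1 =1 restr p2.
  apply: (glap_inj (fun=> lexx 0) poisson_coef_ge0 poisson_reach) => j jF.
    have jFS : j \in FS by rewrite inE jF.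
    by apply: oppr_inj; rewrite -!lap_p_glap !restrE // E1 // E2.
  rewrite /restr; case: ifP => // jFS.
  have jS : j \in LS by move: jFS; rewrite inE (negbTE jF).
  by rewrite S1 // S2.
by move=> i iFS; have := restr_eq i; rewrite /restr iFS.
Qed.

Lemma step_uniquely_solvable (implicit : bool) (rho : R) (fk uk : 'I_N -> 'rV[R]_d) :
  (exists! ut : 'I_N -> 'rV[R]_d,
    (forall i, i \in FS -> dt^-1 *: (ut i - uk i) =
       nu *: lap_v dw h V x (if implicit then ut else uk) i + fk i) /\
    (forall i, i \in ~: FS -> ut i = 0)) ->
  uniquely_solvable dw h V x implicit LF LS (~: FS) rho nu dt fk uk.
Proof.
have dt_neq0 : dt != 0 := lt0r_neq0 dt_gt0.
move=> [ut [[Eb Wb] ut_uniq]]; split.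
  have [p [Ec Sc]] := pressure_solvable (fun i => rho / dt * div_v dw h V x ut i).
  have [un [[Ed Wd] _]] := explicit_update FS ut
    (fun i => - (rho^-1 *: grad_p dw h V x FS p i)) dt_neq0.
  by exists ut, p, un.
move=> ut1 p1 un1 ut2 p2 un2 [B1 [W1 [C1 [S1 [D1 X1]]]]] [B2 [W2 [C2 [S2 [D2 X2]]]]].
have ut1E : ut1 = ut by apply/esym/ut_uniq.
have ut2E : ut2 = ut by apply/esym/ut_uniq.
subst ut1 ut2.
have p12 := pressure_unique C1 S1 C2 S2.
have [un [_ un_uniq]] := explicit_update FS ut
  (fun i => - (rho^-1 *: grad_p dw h V x FS p1 i)) dt_neq0.
split=> //; split=> //.
rewrite -(un_uniq un1) ?(un_uniq un2) //; split=> // i iFS.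
by rewrite D2 // (grad_p_eq p12 iFS).
Qed.

End ISPHStep.

Lemma weight_fun_dw_le0 (R : realType) (d : nat) (w dw : R -> R) (r0 : R) :
  weight_fun d w dw r0 -> forall r, 0 <= r -> dw r <= 0.
Proof.
move=> [_ [_ [_ [_ [dw_lt0 [dw0 [dw_out _]]]]]]] r; rewrite le0r => /orP[/eqP ->|r_gt0].
  by rewrite dw0.
by case: (ltP r r0) => [r_lt|r_ge]; [apply/ltW/dw_lt0; rewrite r_gt0 | rewrite dw_out].
Qed.

Theorem theorem1 (R : realType) (d : nat) (hd : (d == 2%N) || (d == 3%N))
  (Omega : set 'rV[R]_d) (Omega_open : open Omega) (Omega_conn : connected Omega)
  (Omega_bdd : bounded_set Omega) (volOmega : R) (volOmega_pos : 0 < volOmega)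
  (rho nu T : R) (rho_pos : 0 < rho) (nu_pos : 0 < nu) (T_pos : 0 < T)
  (f : 'rV[R]_d -> R -> 'rV[R]_d) (u0 : 'rV[R]_d -> 'rV[R]_d)
  (dt : R) (dt_pos : 0 < dt)
  (w dw : R -> R) (r0 : R) (hw : weight_fun d w dw r0)
  (h : R) (h_pos : 0 < h)
  (N : nat) (V : 'I_N -> R) (V_pos : forall i, 0 < V i)
  (V_sum : \sum_(i < N) V i = volOmega)
  (x : nat -> 'I_N -> 'rV[R]_d) (LF LS LW : nat -> {set 'I_N}) :
  let K := Num.truncn (T / dt) in
  (forall k, (k < K)%N ->
     [/\ (forall i, closure Omega (x k i)),
         (forall i j, i != j -> x k i != x k j),
         (exists i j, i != j /\ enorm (x k i - x k j) < r0 * h),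
         [/\ (forall i, i \in LF k :|: LS k :|: LW k), (forall i, i \in LF k -> i \notin LS k),
             (forall i, i \in LF k -> i \notin LW k) & (forall i, i \in LS k -> i \notin LW k)]
       & h_connected h (x k) r0 (LF k) (LS k) (LW k)]) ->
  forall k, (k < K)%N ->
  let fk := fun i : 'I_N =>
    if i \in LW k then 0 else f (x k i) (k%:R * dt) in
  forall uk : 'I_N -> 'rV[R]_d,
    uniquely_solvable dw h V (x k) true (LF k) (LS k) (LW k) rho nu dt fk uk /\
    uniquely_solvable dw h V (x k) false (LF k) (LS k) (LW k) rho nu dt fk uk.
Proof.
move=> K steps_ok k kK fk uk; clearbody fk.
have [_ _ _ [cover F_S F_W S_W] conn] := steps_ok k kK.
have [_ [_ [_ [_ [dw_lt0 _]]]]] := hw.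
have dw_le0 := weight_fun_dw_le0 hw.
have nu_ge0 := ltW nu_pos.
have LS_reachable i (iF : i \in LF k) := (conn i iF).1.
rewrite (partition_compl cover F_W S_W).
split; apply: (step_uniquely_solvable (r0 := r0)) => //.
  exact: implicit_velocity_unique.
exact: explicit_update (lt0r_neq0 dt_pos).
Qed.
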